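(* For every instance $\pi$ of the fully labeled one-dimensional rearrangement problem (LOR) on $m$ cells, the plan produced by the algorithm SweepCyclesLOR is valid and uses the minimum number of pick-n-swap operations among all valid plans for $\pi$.
   Context: Setting (LOR). A row of $m$ cells $1,\dots,m$, cell $i$ located at the point $i$ on the real line. Each cell initially holds exactly one item; items carry distinct labels $1,\dots,m$. An instance is a permutation $\pi$ of $\{1,\dots,m\}$, where $\pi_i$ is the label of the item initially in cell $i$; the goal is that item $i$ ends in cell $i$ for every $i$. A robot end-effector can hold at most one item; it starts at the rest position $p_0=$ cell $1$ holding nothing. A pick-n-swap operation performed at a cell $p$ is: if the end-effector holds nothing, pick up the item in $p$; if it holds an item and $p$ contains an item, exchange the two (the held item is put into $p$ and the item of $p$ becomes held); if it holds an item and $p$ is empty, put the held item into $p$. A plan is a sequence $P=(p_0,p_1,\dots,p_N)$ of cells: the end-effector travels from $p_0$ to $p_1$, performs a pick-n-swap there, travels to $p_2$, and so on, and finally returns to $p_{N+1}:=p_0$. It is valid if at the end every item $i$ is in cell $i$ and the end-effector holds nothing. $N$ is the number of pick-n-swaps of $P$. SweepCyclesLOR: while some cell $i$ holds an item with label $\ne i$, let $i$ be the smallest such cell; go to $i$ and pick up its item, say with label $g$; while $g\neq i$, go to cell $g$ and swap (item $g$ is placed in cell $g$ and the item previously in cell $g$, with label $g'$, becomes held; set $g:=g'$); finally go to cell $i$ (now empty) and place the held item (label $i$). When no misplaced item remains, return to cell $1$. *)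

(* Cells and labels are 0-indexed: cell / label i : 'I_m
   stands for the paper's cell / label i+1.  In particular the rest position
   p_0 = cell 1 is ord 0 (it only matters for travel, not for the number of
   pick-n-swaps, so it is left implicit). *)
From mathcomp Require Import all_boot all_fingroup.
Set Implicit Arguments. Unset Strict Implicit. Unset Printing Implicit Defensive.

Section LOR.
Variable m : nat.

(* contents of the cells (None = empty) and the item held by the end-effector *)
Definition config := (('I_m -> option 'I_m) * option 'I_m)%type.

Definition init_config (pi : {perm 'I_m}) : config := (fun i => Some (pi i), None).

(* pick-n-swap at cell p.  All three cases of the paper (pick / exchange / put)
   are exactly "exchange the hand content with the cell content"; the
   remaining case (hand empty, cell empty) is then a no-op. *)
Definition pns (s : config) (p : 'I_m) : config :=
  let: (c, h) := s in
  ((fun j => if j == p then h else c j), c p).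

(* a plan (p_0, p_1, ..., p_N) is represented by the sequence [p_1; ...; p_N]
   of cells where pick-n-swaps are performed; N = size P *)
Definition run (pi : {perm 'I_m}) (P : seq 'I_m) : config :=
  foldl pns (init_config pi) P.

Definition valid_plan (pi : {perm 'I_m}) (P : seq 'I_m) : Prop :=
  (forall i : 'I_m, (run pi P).1 i = Some i) /\ (run pi P).2 = None.

(* inner loop of SweepCyclesLOR for the cycle started at cell i:
   while the held label g differs from i go to g and swap; then go to i
   and place. *)
Fixpoint sweep_inner (fuel : nat) (i : 'I_m) (s : config) : seq 'I_m * config :=
  match fuel with
  | 0 => ([::], s)
  | fuel'.+1 =>
    match s.2 with
    | None => ([::], s)
    | Some g =>
      if g == i then ([:: i], pns s i)
      else let: (P, s') := sweep_inner fuel' i (pns s g) in (g :: P, s')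
    end
  end.

(* outer loop: take the smallest cell i with a misplaced item
   (ord_enum m lists the cells in increasing order), pick its item, run the
   inner loop; stop when no misplaced item remains. *)
Fixpoint sweep_outer (fuel : nat) (s : config) : seq 'I_m :=
  match fuel with
  | 0 => [::]
  | fuel'.+1 =>
    match [seq i <- ord_enum m | s.1 i != Some i] with
    | [::] => [::]
    | i :: _ =>
      let: (P, s') := sweep_inner m.+1 i (pns s i) in
      i :: P ++ sweep_outer fuel' s'
    end
  end.

(* the plan produced by SweepCyclesLOR on instance pi (fuel m.+1 is ample:
   each outer iteration fixes at least two cells, each inner loop has at
   most m iterations) *)
Definition SweepCyclesLOR (pi : {perm 'I_m}) : seq 'I_m :=
  sweep_outer m.+1 (init_config pi).

End LOR.

(* Treat the hand as an extra position None and an empty place as holding the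
   "item" None; a configuration reachable from an instance is then a
   permutation of the m + 1 positions, and a pick-n-swap at p composes it with
   the transposition (None, p).  Consider the potential
   2 * (#items in their cell) - (#cycles of that permutation).  A transposition
   merges or splits one cycle, and a pick-n-swap puts an item in its cell only
   when the hand holds exactly that item, which splits off a fixed point; so
   every pick-n-swap raises the potential by at most one.  The potential is
   2m - (m + 1) in the solved configuration, which bounds the length of any
   valid plan from below.  Every move of SweepCyclesLOR either places the held
   item in its cell or picks up a misplaced item with an empty hand (merging
   the fixed point None into another cycle), so it raises the potential by
   exactly one. *)
From mathcomp Require Import all_boot all_fingroup.
From mathcomp Require Import zify.

Set Implicit Arguments. Unset Strict Implicit. Unset Printing Implicit Defensive.

Lemma porbit_fix (T : finType) (s : {perm T}) x : s x = x -> porbit s x = [set x].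
Proof.
move=> sx; apply/setP => y; rewrite inE; apply/porbitP/eqP => [[k ->]|->].
  by elim: k => [|k IHk]; rewrite ?expg0 ?perm1 // expgSr permM IHk.
by exists 0; rewrite expg0 perm1.
Qed.

Lemma card_porbits1 (T : finType) : #|porbits (1 : {perm T})| = #|T|.
Proof.
rewrite /porbits (eq_imset _ (fun x => porbit_fix (perm1 x))).
by rewrite card_imset //; apply: set1_inj.
Qed.

Section SweepCycles.
Variable m : nat.
Implicit Types (s : config m) (p i : 'I_m) (P : seq 'I_m).

Lemma pns_hand s p : (pns s p).2 = s.1 p.
Proof. by case: s. Qed.

Lemma pns_cell s p j : (pns s p).1 j = if j == p then s.2 else s.1 j.
Proof. by case: s. Qed.

Definition content s (x : option 'I_m) : option 'I_m :=
  if x is Some i then s.1 i else s.2.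

Lemma content_pns s p : content (pns s p) =1 content s \o tperm None (Some p).
Proof.
case: s => c h [i|] /=; case: tpermP => //= [[->]|_ /eqP Nip]; first by rewrite eqxx.
by case: eqP => // Eip; rewrite Eip eqxx in Nip.
Qed.

Lemma content_pns_inj s p : injective (content s) -> injective (content (pns s p)).
Proof. by move=> inj_s x y; rewrite !content_pns => /inj_s; apply: (can_inj (tpermK _ _)). Qed.

Lemma content_foldl_inj s P :
  injective (content s) -> injective (content (foldl (@pns m) s P)).
Proof. by elim: P s => [|p P IHP] s //= inj_s; apply/IHP/content_pns_inj. Qed.

Lemma cell_inj s : injective (content s) -> injective s.1.
Proof. by move=> inj_s i j Eij; apply: (@Some_inj _ i j); apply: inj_s. Qed.

Lemma cell_neq_hand s p : injective (content s) -> s.1 p != s.2.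
Proof. by move=> inj_s; apply/eqP => /(inj_s (Some p) None). Qed.

Definition config_perm s : {perm option 'I_m} :=
  if injectiveP (content s) is ReflectT inj_s then perm inj_s else 1%g.

Lemma config_permE s : injective (content s) -> config_perm s =1 content s.
Proof. by rewrite /config_perm; case: injectiveP => // inj_s _; apply: permE. Qed.

Lemma config_perm_pns s p : injective (content s) ->
  config_perm (pns s p) = (tperm None (Some p) * config_perm s)%g.
Proof.
move=> inj_s; apply/permP => x.
by rewrite permM !config_permE ?content_pns //; apply: content_pns_inj.
Qed.

Definition ncycles s := #|porbits (config_perm s)|.

Definition nfixed s := #|[pred i | s.1 i == Some i]|.

Definition solved s := (forall i, s.1 i = Some i) /\ s.2 = None.

Lemma nfixed_le s : nfixed s <= m.
Proof. by rewrite -[leqRHS]card_ord max_card. Qed.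

Lemma nfixed_pns s p :
  nfixed (pns s p) + (s.1 p == Some p) = nfixed s + (s.2 == Some p).
Proof.
rewrite /nfixed (cardD1 p) [in RHS](cardD1 p).
have -> : #|[predD1 [pred i | (pns s p).1 i == Some i] & p]| =
          #|[predD1 [pred i | s.1 i == Some i] & p]|.
  by apply: eq_card => j; rewrite !inE pns_cell; case: (j =P p).
by rewrite !inE pns_cell eqxx [LHS]addnC addnA [RHS]addnAC.
Qed.

Lemma ncycles_pns s p : injective (content s) ->
  ncycles (pns s p) + (None \notin porbit (config_perm s) (Some p)).*2 =
  ncycles s + 1.
Proof. by move=> inj_s; rewrite /ncycles config_perm_pns // porbits_mul_tperm. Qed.

Lemma hand_in_porbit s p : injective (content s) -> s.2 = Some p ->
  None \in porbit (config_perm s) (Some p).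
Proof.
move=> inj_s hand_p; rewrite porbit_sym; apply/porbitP; exists 1.
by rewrite expg1 config_permE.
Qed.

(* The potential [2 * nfixed - ncycles], written additively as it may be negative. *)
Lemma pns_potential_le s p : injective (content s) ->
  ncycles s + (nfixed (pns s p)).*2 <= ncycles (pns s p) + (nfixed s).*2 + 1.
Proof.
move=> inj_s; have := ncycles_pns p inj_s; have := nfixed_pns s p.
case: (s.2 =P Some p) => [hand_p|_]; last by case: (_ \notin _); case: (_ == _); lia.
by rewrite hand_in_porbit //; case: (_ == _); lia.
Qed.

Definition tight_move s p := s.2 = Some p \/ (s.2 = None /\ s.1 p != Some p).

Fixpoint tight_plan s P :=
  if P is p :: P' then tight_move s p /\ tight_plan (pns s p) P' else True.

Lemma tight_plan_cat s P1 P2 : tight_plan s P1 ->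
  tight_plan (foldl (@pns m) s P1) P2 -> tight_plan s (P1 ++ P2).
Proof. by elim: P1 s => [|p P1 IHP] s //= [tight_p tight_P1] /(IHP _ tight_P1). Qed.

Lemma tight_move_potential s p : injective (content s) -> tight_move s p ->
  ncycles s + (nfixed (pns s p)).*2 = ncycles (pns s p) + (nfixed s).*2 + 1.
Proof.
move=> inj_s tight_p; have := ncycles_pns p inj_s; have := nfixed_pns s p.
case: tight_p => [hand_p | [hand0 misplaced_p]].
  have := cell_neq_hand p inj_s; rewrite hand_in_porbit // hand_p eqxx.
  by move/negbTE ->; lia.
have free_hand : config_perm s None = None by rewrite config_permE.
by rewrite porbit_sym porbit_fix // inE hand0 (negbTE misplaced_p) /=; lia.
Qed.

Lemma plan_potential_le s P : injective (content s) ->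
  ncycles s + (nfixed (foldl (@pns m) s P)).*2 <=
  ncycles (foldl (@pns m) s P) + (nfixed s).*2 + size P.
Proof.
elim: P s => [|p P IHP] s inj_s /=; first lia.
by have := IHP _ (@content_pns_inj _ p inj_s); have := pns_potential_le p inj_s; lia.
Qed.

Lemma tight_plan_potential s P : injective (content s) -> tight_plan s P ->
  ncycles s + (nfixed (foldl (@pns m) s P)).*2 =
  ncycles (foldl (@pns m) s P) + (nfixed s).*2 + size P.
Proof.
elim: P s => [|p P IHP] s inj_s /=; first lia.
move=> [tight_p tight_P]; have := IHP _ (@content_pns_inj _ p inj_s) tight_P.
by have := tight_move_potential inj_s tight_p; lia.
Qed.

Lemma solved_content s : solved s -> content s =1 id.
Proof. by case=> cells hand [i|] /=. Qed.

Lemma solved_ncycles s : solved s -> ncycles s = m.+1.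
Proof.
move=> solved_s.
have inj_s : injective (content s) by move=> x y; rewrite !solved_content.
rewrite /ncycles (_ : config_perm s = 1%g).
  by rewrite card_porbits1 card_option card_ord.
by apply/permP => x; rewrite config_permE // solved_content ?perm1.
Qed.

Lemma solved_nfixed s : solved s -> nfixed s = m.
Proof.
by case=> cells _; rewrite /nfixed -[RHS]card_ord; apply: eq_card => i; rewrite inE /= cells eqxx.
Qed.

Lemma plan_size_ge s P : injective (content s) -> solved (foldl (@pns m) s P) ->
  ncycles s + m.*2 <= m.+1 + (nfixed s).*2 + size P.
Proof.
move=> inj_s solved_P; have := plan_potential_le P inj_s.
by rewrite (solved_ncycles solved_P) (solved_nfixed solved_P).
Qed.

Lemma tight_plan_size s P : injective (content s) -> tight_plan s P ->
  solved (foldl (@pns m) s P) -> ncycles s + m.*2 = m.+1 + (nfixed s).*2 + size P.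
Proof.
move=> inj_s tight_P solved_P; have := tight_plan_potential inj_s tight_P.
by rewrite (solved_ncycles solved_P) (solved_nfixed solved_P).
Qed.

Lemma sweep_innerE fuel i s :
  (sweep_inner fuel i s).2 = foldl (@pns m) s (sweep_inner fuel i s).1.
Proof.
elim: fuel s => [|fuel IHfuel] s //=; case: s.2 => [g|] //.
case: eqP => // _; move: (IHfuel (pns s g)).
by case: (sweep_inner fuel i (pns s g)).
Qed.

Lemma sweep_inner_spec fuel i s : injective (content s) -> s.2 != None ->
  s.1 i = None -> m - nfixed s < fuel ->
  let P := (sweep_inner fuel i s).1 in
  [/\ tight_plan s P, (foldl (@pns m) s P).2 = None
    & nfixed s < nfixed (foldl (@pns m) s P)].
Proof.
elim: fuel s => [|fuel IHfuel] s inj_s; first lia.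
case hand_g: s.2 => [g|] // _ empty_i bound /=; rewrite hand_g.
have := nfixed_pns s g; have := cell_neq_hand g inj_s; rewrite hand_g eqxx.
move=> /negbTE -> /= placed_g.
have tight_g : tight_move s g by left.
case: (g =P i) => [Egi | neq_gi] /=.
  by subst g; split=> //; [rewrite pns_hand | lia].
have inj_g := @content_pns_inj _ g inj_s.
have busy_hand : (pns s g).2 != None.
  by rewrite pns_hand -empty_i; apply/eqP => /(cell_inj inj_s).
have empty_i' : (pns s g).1 i = None.
  by rewrite pns_cell; case: (i =P g) => [/esym|].
have := IHfuel _ inj_g busy_hand empty_i'; have := nfixed_le (pns s g).
case: (sweep_inner fuel i (pns s g)) => P s' /= le_m IH.
by have [] := IH ltac:(lia); split=> //; lia.
Qed.

Lemma first_misplaced s i r : [seq j <- ord_enum m | s.1 j != Some j] = i :: r ->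
  s.1 i != Some i.
Proof.
move=> Es; have : i \in [seq j <- ord_enum m | s.1 j != Some j] by rewrite Es inE eqxx.
by rewrite mem_filter => /andP[].
Qed.

Lemma no_misplaced s : [seq j <- ord_enum m | s.1 j != Some j] = [::] ->
  forall i, s.1 i = Some i.
Proof.
move=> Es i; apply/eqP; apply: contraT => misplaced_i.
have : i \in [seq j <- ord_enum m | s.1 j != Some j].
  by rewrite mem_filter misplaced_i mem_ord_enum.
by rewrite Es.
Qed.

Lemma sweep_outerS fuel s : sweep_outer fuel.+1 s =
  if [seq j <- ord_enum m | s.1 j != Some j] is i :: _ then
    let: (P, s') := sweep_inner m.+1 i (pns s i) in i :: P ++ sweep_outer fuel s'
  else [::].
Proof. by []. Qed.

Lemma sweep_outer_spec fuel s : injective (content s) -> s.2 = None ->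
  m - nfixed s < fuel ->
  tight_plan s (sweep_outer fuel s) /\ solved (foldl (@pns m) s (sweep_outer fuel s)).
Proof.
elim: fuel s => [|fuel IHfuel] s inj_s hand0 bound; first lia.
rewrite sweep_outerS; case Es: [seq j <- ord_enum m | s.1 j != Some j] => [|i r].
  by split=> //; split=> //; apply: no_misplaced.
have misplaced_i := first_misplaced Es.
have tight_i : tight_move s i by right.
have nfixed_i : nfixed (pns s i) = nfixed s.
  by have := nfixed_pns s i; rewrite hand0 (negbTE misplaced_i) /= !addn0.
have inj_i := @content_pns_inj _ i inj_s.
have busy_hand : (pns s i).2 != None.
  by rewrite pns_hand -hand0 cell_neq_hand.
have empty_i : (pns s i).1 i = None by rewrite pns_cell eqxx.
have := @sweep_inner_spec m.+1 i _ inj_i busy_hand empty_i; rewrite nfixed_i.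
move: (sweep_innerE m.+1 i (pns s i)); have := nfixed_le s.
case: (sweep_inner m.+1 i (pns s i)) => P s' /= le_m -> /(_ ltac:(lia)).
case=> tight_P hand0' more_fixed.
have [tight_rest solved_rest] := IHfuel _ (@content_foldl_inj _ P inj_i) hand0'
  ltac:(have := nfixed_le (foldl (@pns m) (pns s i) P); lia).
by split; [split=> //; apply: tight_plan_cat | rewrite foldl_cat].
Qed.

End SweepCycles.

Theorem proposition1 (m : nat) (pi : {perm 'I_m}) :
  valid_plan pi (SweepCyclesLOR pi) /\
  (forall P : seq 'I_m, valid_plan pi P -> size (SweepCyclesLOR pi) <= size P).
Proof.
have inj0 : injective (content (init_config pi)).
  by move=> [i|] [j|] //= [/perm_inj ->].
have [tight_sweep solved_sweep] :=
  sweep_outer_spec inj0 erefl (leq_subr (nfixed (init_config pi)) m : _ < m.+1).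
split=> [|P valid_P]; first exact: solved_sweep.
have := plan_size_ge inj0 valid_P; have := tight_plan_size inj0 tight_sweep solved_sweep.
rewrite /SweepCyclesLOR; lia.
Qed.
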